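(* Let $k$ be an algebraically closed field, let $L$ and $G$ be finite groups with $G$ acting on $L$ by group automorphisms (and $L$ acting trivially on $G$), and let $K=kL\natural^{\tau}_{\sigma}k^G$ be the crossed coproduct Hopf algebra determined by normalized $2$-cocycles $\sigma$ and $\tau$ as described in the context. Let $M$, $N$ be finite dimensional $K$-modules. Then for each $x\in G$ there are isomorphisms of $k^{\sigma_x}L$-modules \begin{itemize} \item[(i)] $(M\otimes N)_x\simeq \bigoplus_{y,z\in G,\ yz=x} M_y\otimes {}^{y}N_z$, and \item[(ii)] $(M^* )_x\simeq {}^{x}(M_{x^{-1}})^*$, \end{itemize} where the right hand sides are regarded as $k^{\sigma_x}L$-modules as explained in the context.
   Context: $k^G=\mathrm{Hom}_k(kG,k)$ has basis $\{p_x:x\in G\}$ dual to $G$, with $p_xp_y=\delta_{x,y}p_x$. A normalized 2-cocycle $\sigma:L\times L\to (k^G)^\times$ is written $\sigma(l,m)=\sum_{x\in G}\sigma_x(l,m)p_x$ with $\sigma(l,m)\sigma(lm,n)=\sigma(m,n)\sigma(l,mn)$ and $\sigma(1,l)=\sigma(l,1)=1$; each $\sigma_x:L\times L\to k^\times$ is then a normalized 2-cocycle. A normalized 2-cocycle $\tau:L\to k^G\otimes k^G$ is $\tau(l)=\sum_{x,y}\tau_{x,y}(l)p_x\otimes p_y$ with $\tau_{x,y}:L\to k^\times$ satisfying $\tau_{xy,z}(l)\tau_{x,y}(l)=\tau_{x,yz}(l)\tau_{y,z}(x^{-1}\cdot l)$ and $\tau_{1,x}=\tau_{x,1}=1$.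 It is assumed that $\sigma_{xy}(l,m)\tau_{x,y}(lm)=\sigma_x(l,m)\sigma_y(x^{-1}\cdot l,x^{-1}\cdot m)\tau_{x,y}(l)\tau_{x,y}(m)$ for all $l,m\in L$, $x,y\in G$. The crossed coproduct $K=kL\natural^\tau_\sigma k^G$ is $kL\otimes k^G$ (elements $l\natural p_x$) with product $(l\natural p_x)(m\natural p_y)=\delta_{x,y}\sigma_x(l,m)\,lm\natural p_x$, coproduct $\Delta(l\natural p_x)=\sum_{y\in G}\tau_{y,y^{-1}x}(l)(l\natural p_y)\otimes((y^{-1}\cdot l)\natural p_{y^{-1}x})$, counit $\varepsilon(l\natural p_x)=\delta_{1,x}$ and antipode $S(l\natural p_x)=\tau_{x,x^{-1}}(l^{-1})\sigma_x(l^{-1},l)(x^{-1}\cdot l^{-1})\natural p_{x^{-1}}$. For a 2-cocycle $\alpha:L\times L\to k^\times$, the twisted group algebra $k^\alpha L$ has basis $\{\overline{l}:l\in L\}$ with $\overline{l}\,\overline{m}=\alpha(l,m)\overline{lm}$; the subalgebra $kL\cdot p_x$ of $K$ is identified with $k^{\sigma_x}L$ via $l\natural p_x\mapsto \overline{l}$. For a $K$-module $M$, $M_x=p_x\cdot M$ is a $k^{\sigma_x}L$-module. For $y\in G$ and a 2-cocycle $\alpha$, ${}^y\alpha(l,m)=\alpha(y^{-1}\cdot l,y^{-1}\cdot m)$, and the conjugate ${}^yM_z$ is $M_z$ as a vector space with $k^{{}^y\sigma_z}L$-module structure $\overline{l}\cdot_y v=\overline{y^{-1}\cdot l}\cdot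 v$. The tensor product of a $k^\alpha L$-module and a $k^\beta L$-module is a $k^{\alpha\beta}L$-module with $\overline{l}$ acting as $\overline{l}\otimes\overline{l}$; the dual of a $k^\alpha L$-module $U$ is a $k^{\alpha^{-1}}L$-module via $(\overline{l}\cdot f)(u)=f(\overline{l}^{-1}u)$. Thus $M_y\otimes{}^yN_z$ is a $k^{\sigma_y\,{}^y\sigma_z}L$-module, made into a $k^{\sigma_{yz}}L$-module via the algebra isomorphism $k^{\sigma_{yz}}L\to k^{\sigma_y\,{}^y\sigma_z}L$, $\overline{l}\mapsto\tau_{y,z}(l)\overline{l}$; and ${}^x(M_{x^{-1}})^*$ is a $k^{{}^x\sigma_{x^{-1}}^{-1}}L$-module, made into a $k^{\sigma_x}L$-module via the algebra isomorphism $k^{\sigma_x}L\to k^{{}^x\sigma_{x^{-1}}^{-1}}L$, $\overline{l}\mapsto \tau_{x,x^{-1}}^{-1}(l)\overline{l}$. $M^*=\mathrm{Hom}_k(M,k)$ with $(b\cdot f)(m)=f(S(b)m)$. *)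

From HB Require Import structures.
From mathcomp Require Import all_boot all_order all_algebra all_fingroup.
Set Implicit Arguments. Unset Strict Implicit. Unset Printing Implicit Defensive.
Import GRing.Theory.
Local Open Scope ring_scope.

(*  - sig x l m     = sigma_x(l,m),   tau x y l = tau_{x,y}(l)               *)
(*  - a finite dimensional K-module M of dimension n is given by the matrices *)
(*    rho l x : 'M_n by which the basis element l # p_x acts on column       *)
(*    vectors 'cV_n (left action v |-> rho l x *m v).                        *)

Section CrossedCoproduct.
Variables (k : fieldType) (L G : finGroupType).

Definition group_aut_action (act : G -> L -> L) : Prop :=
  [/\ forall l, act 1%g l = l,
      forall x y l, act (x * y)%g l = act x (act y l) &
      forall x l m, act x (l * m)%g = (act x l * act x m)%g].

(* sigma : L x L -> (k^G)^x and tau : L -> (k^G (x) k^G)^x normalized      *)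
Record cc_data (act : G -> L -> L) (sig : G -> L -> L -> k)
    (tau : G -> G -> L -> k) : Prop := CCData {
  sig_unit : forall x l m, sig x l m != 0;
  tau_unit : forall x y l, tau x y l != 0;
  sig_cocycle : forall x l m n,
    sig x l m * sig x (l * m)%g n = sig x m n * sig x l (m * n)%g;
  sig_norm : forall x l, sig x 1%g l = 1 /\ sig x l 1%g = 1;
  tau_cocycle : forall x y z l,
    tau (x * y)%g z l * tau x y l = tau x (y * z)%g l * tau y z (act x^-1%g l);
  tau_norm : forall x l, tau 1%g x l = 1 /\ tau x 1%g l = 1;
  sig_tau_compat : forall x y l m,
    sig (x * y)%g l m * tau x y (l * m)%g
    = sig x l m * sig y (act x^-1%g l) (act x^-1%g m) * tau x y l * tau x y m }.

(* A K-module structure on k^n: rho l x is the action of l # p_x.          *)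
(* (l#p_x)(m#p_y) = delta_{x,y} sigma_x(l,m) lm#p_x, and 1_K = sum_x 1#p_x *)
Record Kmodule (sig : G -> L -> L -> k) (n : nat) (rho : L -> G -> 'M[k]_n)
    : Prop := KModule {
  Kmod_mul : forall l m x y,
    rho l x *m rho m y = if x == y then sig x l m *: rho (l * m)%g x else 0;
  Kmod_unit : \sum_(x : G) rho 1%g x = 1%:M }.

Definition mod_kact n (rho : L -> G -> 'M[k]_n) : L -> G -> 'cV[k]_n -> 'cV[k]_n :=
  fun l x v => rho l x *m v.

(* M (x) N, realized on 'M_(n,m) (X <-> sum_ij X_ij e_i (x) f_j, so that   *)
(* A (x) B acts as X |-> A X B^T), with the action through the coproduct  *)
(* Delta(l#p_x) = sum_y tau_{y,y^-1x}(l) (l#p_y) (x) ((y^-1.l)#p_{y^-1x}). *)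
Definition tensor_kact (act : G -> L -> L) (tau : G -> G -> L -> k) n m
    (rhoM : L -> G -> 'M[k]_n) (rhoN : L -> G -> 'M[k]_m)
    : L -> G -> 'M[k]_(n, m) -> 'M[k]_(n, m) :=
  fun l x X => \sum_(y : G) tau y (y^-1 * x)%g l *:
       (rhoM l y *m X *m (rhoN (act y^-1%g l) (y^-1 * x)%g)^T).

(* M^*, realized on 'cV_n (f <-> column of values f(e_i)), with           *)
(* (b.f)(v) = f(S(b) v), S(l#p_x) = tau_{x,x^-1}(l^-1) sigma_x(l^-1,l)      *)
(*                                   (x^-1.l^-1)#p_{x^-1}.                  *)
Definition dual_kact (act : G -> L -> L) (sig : G -> L -> L -> k)
    (tau : G -> G -> L -> k) n (rho : L -> G -> 'M[k]_n)
    : L -> G -> 'cV[k]_n -> 'cV[k]_n :=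
  fun l x f => (tau x x^-1%g l^-1%g * sig x l^-1%g l) *:
       ((rho (act x^-1%g l^-1%g) x^-1%g)^T *m f).

(* A k^alpha L-module living on a subspace U of a k-vector space V,        *)
(* with lbar acting by tw_act l (which is only relevant on U).             *)
Record twmod (V : lmodType k) := TwMod {
  tw_sub : V -> Prop;
  tw_act : L -> V -> V }.

Definition tw_iso (V W : lmodType k) (T : twmod V) (T' : twmod W) : Prop :=
  exists f : {linear V -> W},
    [/\ forall v, tw_sub T v -> tw_sub T' (f v),
        forall v v', tw_sub T v -> tw_sub T v' -> f v = f v' -> v = v',
        forall w, tw_sub T' w -> exists2 v, tw_sub T v & f v = w &
        forall l v, tw_sub T v -> f (tw_act T l v) = tw_act T' l (f v)].

(* M_x = p_x . M as a k^{sigma_x}L-module (lbar acts as l # p_x) *)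
Definition Kcomp (V : lmodType k) (kact : L -> G -> V -> V) (x : G) : twmod V :=
  TwMod (fun v => exists w, v = kact 1%g x w) (fun l => kact l x).

Record mxmod n := MxMod { mx_sub : 'M[k]_n; mx_rep : L -> 'M[k]_n }.

Definition mx_tw n (M : mxmod n) : twmod 'cV[k]_n :=
  TwMod (fun v => exists w, v = mx_sub M *m w) (fun l v => mx_rep M l *m v).

Definition Kcomp_mx n (rho : L -> G -> 'M[k]_n) (x : G) : mxmod n :=
  MxMod (rho 1%g x) (fun l => rho l x).

Definition mx_conj (act : G -> L -> L) (y : G) n (M : mxmod n) : mxmod n :=
  MxMod (mx_sub M) (fun l => mx_rep M (act y^-1%g l)).

(* dual U^* of a k^alpha L-module U = im P (P an idempotent, as for M_x):   *)
(* U^* is realized as im P^T (functionals g, restricted to U), and          *)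
(* (lbar.g)(u) = g(lbar^-1 u), where lbar^-1 = alpha(l,l^-1)^-1 (l^-1)bar    *)
(* in k^alpha L.                                                             *)
Definition mx_dual (alpha : L -> L -> k) n (M : mxmod n) : mxmod n :=
  MxMod (mx_sub M)^T (fun l => (alpha l l^-1%g)^-1 *: (mx_rep M l^-1%g)^T).

Definition mx_scale (c : L -> k) n (M : mxmod n) : mxmod n :=
  MxMod (mx_sub M) (fun l => c l *: mx_rep M l).

Definition tw_scale (c : L -> k) (V : lmodType k) (T : twmod V) : twmod V :=
  TwMod (tw_sub T) (fun l v => c l *: tw_act T l v).

(* tensor product U (x) W (lbar acting as lbar (x) lbar), realized on       *)
(* 'M_(n,m) as the subspace im P (x) im Q.                                  *)
Definition tw_tensor n m (M : mxmod n) (N : mxmod m) : twmod 'M[k]_(n, m) :=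
  TwMod (fun X => exists Y, X = mx_sub M *m Y *m (mx_sub N)^T)
        (fun l X => mx_rep M l *m X *m (mx_rep N l)^T).

Definition tw_dsum (V : lmodType k) (T : G -> twmod V) : twmod {ffun G -> V} :=
  TwMod (fun F : {ffun G -> V} => forall y, tw_sub (T y) (F y))
        (fun l (F : {ffun G -> V}) => [ffun y => tw_act (T y) l (F y)]).

End CrossedCoproduct.

From HB Require Import structures.
From mathcomp Require Import all_boot all_order all_algebra all_fingroup all_field.
From mathcomp Require Import ring.

(* Since sigma and tau are normalized, tau_{y,z}(1) = 1, so the
   coproduct makes 1 # p_x act on M (x) N as the sum over yz = x of the
   orthogonal idempotents (1 # p_y) (x) (1 # p_z).  Projecting onto their images
   identifies (M (x) N)_x with the direct sum of the M_y (x) N_z, and on the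
   y-summand l # p_x acts as tau_{y,z}(l) (l # p_y) (x) ((y^-1 . l) # p_z).
   For the dual, S(l # p_x) is a scalar multiple of (x^-1 . l^-1) # p_{x^-1},
   so (M^* )_x and (M_{x^-1})^* are the same subspace; the two scalars agree by
   the compatibility condition between sigma and tau at (l, l^-1). *)

Set Implicit Arguments.
Unset Strict Implicit.
Unset Printing Implicit Defensive.

Import GRing.Theory.
Local Open Scope ring_scope.

Section AutAction.
Variables (L G : finGroupType) (act : G -> L -> L).
Hypothesis Hact : group_aut_action act.

Lemma act_morph1 y : act y 1%g = 1%g.
Proof.
case: Hact => _ _ actM; apply: (mulgI (act y 1%g)).
by rewrite -actM !mulg1.
Qed.

Lemma act_morphV y l : act y l^-1%g = (act y l)^-1%g.
Proof.
case: Hact => _ _ actM; apply: (mulgI (act y l)).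
by rewrite -actM !mulgV act_morph1.
Qed.

End AutAction.

Section CocycleFacts.
Variables (k : fieldType) (L G : finGroupType).
Variables (act : G -> L -> L) (sig : G -> L -> L -> k) (tau : G -> G -> L -> k).
Hypothesis Hact : group_aut_action act.
Hypothesis Hcc : cc_data act sig tau.

Lemma tau_at_unit a b : tau a b 1%g = 1.
Proof.
have := sig_tau_compat Hcc a b 1%g 1%g.
rewrite !(act_morph1 Hact) mulg1 !(proj1 (sig_norm Hcc _ _)) !mul1r => compat.
by apply: (mulfI (tau_unit Hcc a b 1%g)); rewrite mulr1.
Qed.

Lemma sig_unit_component l m : sig 1%g l m = 1.
Proof.
have := sig_tau_compat Hcc 1%g 1%g l m.
case: Hact => act1 _ _.
rewrite invg1 mulg1 !(proj1 (tau_norm Hcc _ _)) !mulr1 !act1 => compat.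
by apply: (mulfI (sig_unit Hcc 1%g l m)); rewrite mulr1.
Qed.

Lemma sig_invC a l : sig a l l^-1%g = sig a l^-1%g l.
Proof.
have := sig_cocycle Hcc a l l^-1%g l.
by rewrite mulgV mulVg (proj1 (sig_norm Hcc _ _)) (proj2 (sig_norm Hcc _ _)) !mulr1.
Qed.

Lemma antipode_coef x l :
  tau x x^-1%g l^-1%g * sig x l^-1%g l =
  (tau x x^-1%g l)^-1 * (sig x^-1%g (act x^-1%g l) (act x^-1%g l)^-1%g)^-1.
Proof.
have := sig_tau_compat Hcc x x^-1%g l l^-1%g.
rewrite !mulgV sig_unit_component tau_at_unit (act_morphV Hact) sig_invC mul1r.
move=> compat.
have nz : tau x x^-1%g l * sig x^-1%g (act x^-1%g l) (act x^-1%g l)^-1%g != 0.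
  exact: mulf_neq0 (tau_unit Hcc _ _ _) (sig_unit Hcc _ _ _).
rewrite -invfM; apply: (mulIf nz); rewrite mulVf // compat.
ring.
Qed.

End CocycleFacts.

Section KmoduleIdempotents.
Variables (k : fieldType) (L G : finGroupType) (sig : G -> L -> L -> k).
Hypothesis sig_normalized : forall x l, sig x 1%g l = 1 /\ sig x l 1%g = 1.
Variables (n : nat) (rho : L -> G -> 'M[k]_n).
Hypothesis Hrho : Kmodule sig rho.

Lemma Kmod_idl l y y' :
  rho 1%g y *m rho l y' = if y == y' then rho l y else 0.
Proof.
by rewrite (Kmod_mul Hrho) (proj1 (sig_normalized _ _)) mul1g scale1r.
Qed.

Lemma Kmod_idr l y y' :
  rho l y *m rho 1%g y' = if y == y' then rho l y else 0.
Proof.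
by rewrite (Kmod_mul Hrho) (proj2 (sig_normalized _ _)) mulg1 scale1r.
Qed.

Lemma Kmod_idem y : rho 1%g y *m rho 1%g y = rho 1%g y.
Proof. by rewrite Kmod_idl eqxx. Qed.

End KmoduleIdempotents.

Lemma orth_idem_sum (k : fieldType) (I : finType) (n m : nat)
    (P : I -> 'M[k]_n) (Q : I -> 'M[k]_m)
    (P_orth : forall i j, P i *m P j = if i == j then P i else 0)
    (Q_idem : forall i, Q i *m Q i = Q i) (Y : I -> 'M[k]_(n, m)) i :
  P i *m (\sum_j P j *m Y j *m Q j) *m Q i = P i *m Y i *m Q i.
Proof.
rewrite mulmx_sumr mulmx_suml (bigD1 i) //= big1 ?addr0.
  by rewrite !mulmxA P_orth eqxx -!mulmxA Q_idem.
move=> j ji; rewrite !mulmxA P_orth eq_sym (negbTE ji).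
by rewrite !mul0mx.
Qed.

Section TensorComponent.
Variables (k : fieldType) (L G : finGroupType).
Variables (act : G -> L -> L) (sig : G -> L -> L -> k) (tau : G -> G -> L -> k).
Hypothesis Hact : group_aut_action act.
Hypothesis Hcc : cc_data act sig tau.
Variables (n m : nat) (rhoM : L -> G -> 'M[k]_n) (rhoN : L -> G -> 'M[k]_m).
Hypotheses (HM : Kmodule sig rhoM) (HN : Kmodule sig rhoN).
Variable x : G.

Let sig_normalized := sig_norm Hcc.
Let tensor := tensor_kact act tau rhoM rhoN.

Definition tensor_proj (X : 'M[k]_(n, m)) : {ffun G -> 'M[k]_(n, m)} :=
  [ffun y => rhoM 1%g y *m X *m (rhoN 1%g (y^-1 * x)%g)^T].

Fact tensor_proj_is_linear : linear tensor_proj.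
Proof.
move=> a X Y; apply/ffunP=> y.
by rewrite !ffunE mulmxDr mulmxDl -scalemxAr -scalemxAl.
Qed.

HB.instance Definition _ :=
  GRing.isLinear.Build k _ _ _ tensor_proj tensor_proj_is_linear.

Lemma tensor_kact_unit X : tensor 1%g x X = \sum_y tensor_proj X y.
Proof.
apply: eq_bigr => y _.
by rewrite (tau_at_unit Hact Hcc) scale1r (act_morph1 Hact) ffunE.
Qed.

Lemma tensor_proj_sum (Y : G -> 'M[k]_(n, m)) y :
  tensor_proj (\sum_y' tensor_proj (Y y') y') y = tensor_proj (Y y) y.
Proof.
under eq_bigr do rewrite ffunE.
rewrite !ffunE orth_idem_sum // => [i j|i].
  exact: (Kmod_idl sig_normalized HM).
by rewrite -trmx_mul (Kmod_idem sig_normalized HN).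
Qed.

Lemma tensor_proj_kact_unit X :
  tensor_proj (tensor 1%g x X) =1 tensor_proj X.
Proof. by move=> y; rewrite tensor_kact_unit tensor_proj_sum. Qed.

Lemma tensor_proj_act l X y :
  tensor_proj (tensor l x X) y =
  tau y (y^-1 * x)%g l *:
    (rhoM l y *m tensor_proj X y *m (rhoN (act y^-1%g l) (y^-1 * x)%g)^T).
Proof.
rewrite /tensor /tensor_kact [tensor_proj _ y]ffunE mulmx_sumr mulmx_suml.
rewrite (bigD1 y) //= big1 ?addr0 => [|y' y'y]; last first.
  rewrite -scalemxAr -scalemxAl !mulmxA (Kmod_idl sig_normalized HM).
  by rewrite eq_sym (negbTE y'y) !mul0mx scaler0.
rewrite -scalemxAr -scalemxAl ffunE !mulmxA.
rewrite (Kmod_idl sig_normalized HM) (Kmod_idr sig_normalized HM) eqxx.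
rewrite -!mulmxA -!trmx_mul.
by rewrite (Kmod_idl sig_normalized HN) (Kmod_idr sig_normalized HN) eqxx.
Qed.

Lemma tensor_component_iso :
  tw_iso (Kcomp tensor x)
         (tw_dsum (fun y : G =>
            tw_scale (tau y (y^-1 * x)%g)
              (tw_tensor (Kcomp_mx rhoM y)
                         (mx_conj act y (Kcomp_mx rhoN (y^-1 * x)%g))))).
Proof.
exists tensor_proj; split => /=.
- by move=> v _ y; exists v; rewrite ffunE.
- move=> _ _ [w ->] [w' ->] /ffunP eq_proj.
  rewrite !tensor_kact_unit; apply: eq_bigr => y _.
  by have := eq_proj y; rewrite !tensor_proj_kact_unit.
- move=> F HF.
  have proj_F y : tensor_proj (F y) y = F y.
    have [Y ->] := HF y; rewrite ffunE -!mulmxA -trmx_mul.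
    by rewrite (Kmod_idem sig_normalized HN) !mulmxA (Kmod_idem sig_normalized HM).
  have proj_sumF : tensor_proj (\sum_y F y) =1 F.
    by move=> y; under eq_bigr do rewrite -proj_F; rewrite tensor_proj_sum proj_F.
  exists (\sum_y F y); last exact/ffunP.
  exists (\sum_y F y); rewrite tensor_kact_unit.
  by apply: eq_bigr => y _; rewrite proj_sumF.
- by move=> l v _; apply/ffunP => y; rewrite tensor_proj_act !ffunE.
Qed.

End TensorComponent.

Section DualComponent.
Variables (k : fieldType) (L G : finGroupType).
Variables (act : G -> L -> L) (sig : G -> L -> L -> k) (tau : G -> G -> L -> k).
Hypothesis Hact : group_aut_action act.
Hypothesis Hcc : cc_data act sig tau.
Variables (n : nat) (rho : L -> G -> 'M[k]_n) (x : G).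

Lemma dual_kact_unit f :
  dual_kact act sig tau rho 1%g x f = (rho 1%g x^-1%g)^T *m f.
Proof.
rewrite /dual_kact invg1 (act_morph1 Hact) (tau_at_unit Hact Hcc).
by rewrite (proj1 (sig_norm Hcc _ _)) mulr1 scale1r.
Qed.

Lemma dual_component_iso :
  tw_iso (Kcomp (dual_kact act sig tau rho) x)
         (mx_tw (mx_scale (fun l => (tau x x^-1%g l)^-1)
                  (mx_conj act x (mx_dual (sig x^-1%g) (Kcomp_mx rho x^-1%g))))).
Proof.
exists idfun; split => //=.
- by move=> _ [w ->]; exists w; rewrite dual_kact_unit.
- move=> _ [w ->]; exists ((rho 1%g x^-1%g)^T *m w) => //.
  by exists w; rewrite dual_kact_unit.
- move=> l v _; rewrite /dual_kact (act_morphV Hact) -!scalemxAl scalerA.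
  by rewrite (antipode_coef Hact Hcc).
Qed.

End DualComponent.

Theorem theorem2p2 (k : closedFieldType) (L G : finGroupType)
    (act : G -> L -> L) (sig : G -> L -> L -> k) (tau : G -> G -> L -> k)
    (Hact : group_aut_action act) (Hcc : cc_data act sig tau)
    (n m : nat) (rhoM : L -> G -> 'M[k]_n) (rhoN : L -> G -> 'M[k]_m)
    (HM : Kmodule sig rhoM) (HN : Kmodule sig rhoN) (x : G) :
  (* (i)  (M (x) N)_x ~ (+)_{yz = x} M_y (x) ^y N_z *)
  tw_iso (Kcomp (tensor_kact act tau rhoM rhoN) x)
         (tw_dsum (fun y : G =>
            tw_scale (tau y (y^-1 * x)%g)
              (tw_tensor (Kcomp_mx rhoM y)
                         (mx_conj act y (Kcomp_mx rhoN (y^-1 * x)%g)))))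
  /\
  (* (ii) dual(M)_x ~ ^x dual(M_{x^-1}) *)
  tw_iso (Kcomp (dual_kact act sig tau rhoM) x)
         (mx_tw (mx_scale (fun l => (tau x x^-1%g l)^-1)
                  (mx_conj act x (mx_dual (sig x^-1%g) (Kcomp_mx rhoM x^-1%g))))).
Proof.
split; first exact: (tensor_component_iso Hact Hcc HM HN).
exact: (dual_component_iso Hact Hcc).
Qed.
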